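(* Let $b\in L^1_{loc}(\mathbf{R}^n\times\mathbf{R})$ be a vector field. There is a constant $C$ depending only on $n$ such that for all $x,y\in\mathbf{R}^n$ and $t>0$, \[ \int_0^t\!\!\int_{\mathbf{R}^n}\frac{1}{(|x-z|+\sqrt{t-\tau})^{n+1}}\cdot\frac{|b(z,\tau)|}{(|z-y|+\sqrt{\tau})^{n+1}}\,dz\,d\tau\le C\,B(b,0,t)\,K_1(x,t;y,0). \]
   Context: $K_1(x,t;y,s)=\dfrac{1}{(|x-y|+\sqrt{t-s})^{n+1}}$ for $t\ge s$ (with $(x,t)\neq(y,s)$), and $K_1(x,t;y,s)=0$ for $s>t$. For $l<t$, \[ B(b,l,t)=\sup_{x\in\mathbf{R}^n}\int_l^t\!\!\int_{\mathbf{R}^n}\big[K_1(x,t;y,s)+K_1(x,s;y,l)\big]\,|b(y,s)|\,dy\,ds . \] *)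

From HB Require Import structures.
From mathcomp Require Import all_boot all_order all_algebra.
From mathcomp Require Import all_classical all_reals all_analysis.
Set Implicit Arguments. Unset Strict Implicit. Unset Printing Implicit Defensive.
Import Order.TTheory GRing.Theory Num.Theory.
Import numFieldNormedType.Exports.
Local Open Scope classical_set_scope.
Local Open Scope ring_scope.

Definition enorm (R : realType) (n : nat) (v : 'rV[R]_n) : R :=
  Num.sqrt (\sum_(i < n) v ord0 i ^+ 2).

(* Lebesgue integral over R^n of an extended-real valued function, as the
   iterated Lebesgue integral over the coordinates (for nonnegative
   measurable integrands this is the integral w.r.t. n-dim Lebesgue measure,
   by Tonelli). *)
Fixpoint iint (R : realType) (n : nat) : ('rV[R]_n -> \bar R) -> \bar R :=
  match n with
  | 0 => fun f => f 0
  | n'.+1 => fun f =>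
      (\int[@lebesgue_measure R]_x iint (fun v : 'rV[R]_n' => f (row_mx (\row_(j < 1) x) v)))%E
  end.

Definition borel_measurable_RnR (R : realType) (n : nat) (f : 'rV[R]_n -> R -> R) : Prop :=
  forall B : set R, measurable B ->
    (<<s @open ('rV[R]_n * R)%type >>) [set p | B (f p.1 p.2)].

Definition locally_integrable_vf (R : realType) (n : nat)
    (b : 'rV[R]_n -> R -> 'rV[R]_n) : Prop :=
  (forall i : 'I_n, borel_measurable_RnR (fun z tau => b z tau ord0 i)) /\
  (forall r : R, 0 < r ->
     (\int[@lebesgue_measure R]_(tau in `[(- r)%R, r%R])
        iint (fun z : 'rV[R]_n =>
                if (enorm z <= r)%R then (enorm (b z tau))%:E else 0%E) < +oo)%E).

Definition K1 (R : realType) (n : nat) (x : 'rV[R]_n) (t : R) (y : 'rV[R]_n) (s : R)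
  : \bar R :=
  if (t < s)%R then 0%E
  else if (x == y) && (t == s) then +oo%E
  else ((enorm (x - y) + Num.sqrt (t - s)) ^+ n.+1)^-1%:E.

Definition Bfun (R : realType) (n : nat) (b : 'rV[R]_n -> R -> 'rV[R]_n) (l t : R)
  : \bar R :=
  ereal_sup (range (fun x : 'rV[R]_n =>
    (\int[@lebesgue_measure R]_(s in `]l%R, t%R[)
       iint (fun y : 'rV[R]_n => (K1 x t y s + K1 x s y l) * (enorm (b y s))%:E))%E)).

From HB Require Import structures.
From mathcomp Require Import all_boot all_order all_algebra.
From mathcomp Require Import all_classical all_reals all_analysis.
From mathcomp Require Import measurable_realfun.
From mathcomp Require Import lra.
Set Implicit Arguments. Unset Strict Implicit. Unset Printing Implicit Defensive.
Import Order.TTheory GRing.Theory Num.Theory.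
Import numFieldNormedType.Exports.
Local Open Scope classical_set_scope.
Local Open Scope ring_scope.

(* Put A = |x - z| + sqrt (t - tau), B = |z - y| + sqrt tau, D = |x - y| + sqrt t
   and m = n + 1.  From |x - y| <= 2 (|x - z| + |z - y|) and
   sqrt t <= sqrt (t - tau) + sqrt tau we get D <= 2 (A + B), so max (A, B) >= D / 4
   and A^-m B^-m <= 4^m D^-m (A^-m + B^-m).  After multiplying by |b(z, tau)| and
   integrating, the A^-m term is part of the integral defining B(b, 0, t) at the
   point x (through K1(x, t; z, tau)) and the B^-m term part of the one at the
   point y (through K1(y, tau; z, 0)); hence C = 2 * 4^m.
   Splitting the iterated integral of the sum needs each layer to be jointly
   measurable; for |b| this follows from its Borel measurability on R^n x R,
   open sets there being countable unions of rational balls. *)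

Section sqrt_inequalities.
Variable R : rcfType.
Implicit Types a b : R.

Lemma sqrtr_le_sqr a b : 0 <= b -> a <= b ^+ 2 -> Num.sqrt a <= b.
Proof. by move=> b0 ab2; rewrite (le_trans (ler_wsqrtr ab2)) // sqrtr_sqr ger0_norm. Qed.

Lemma sqrtrD_le a b : 0 <= a -> 0 <= b ->
  Num.sqrt (a + b) <= Num.sqrt a + Num.sqrt b.
Proof.
move=> a0 b0; apply: sqrtr_le_sqr; first by rewrite addr_ge0 ?sqrtr_ge0.
rewrite sqrrD !sqr_sqrtr //.
have : 0 <= Num.sqrt a * Num.sqrt b by rewrite mulr_ge0 ?sqrtr_ge0.
lra.
Qed.

End sqrt_inequalities.

Section enorm.
Variables (R : realType) (m : nat).
Implicit Types u v : 'rV[R]_m.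

Lemma enorm_ge0 u : 0 <= enorm u.
Proof. exact: sqrtr_ge0. Qed.

Lemma enormN u : enorm (- u) = enorm u.
Proof. by rewrite /enorm; congr Num.sqrt; apply: eq_bigr => i _; rewrite mxE sqrrN. Qed.

Lemma enorm_sqr u : enorm u ^+ 2 = \sum_(i < m) u ord0 i ^+ 2.
Proof. by rewrite sqr_sqrtr // sumr_ge0 // => i _; rewrite sqr_ge0. Qed.

(* The factor 2 only affects the constant and spares us Cauchy-Schwarz. *)
Lemma enormD_le2 u v : enorm (u + v) <= 2 * (enorm u + enorm v).
Proof.
apply: sqrtr_le_sqr; first by rewrite mulr_ge0 // addr_ge0 // enorm_ge0.
apply: (@le_trans _ _ (2 * enorm u ^+ 2 + 2 * enorm v ^+ 2)).
  rewrite !enorm_sqr !mulr_sumr -big_split /=; apply: ler_sum => i _.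
  rewrite mxE; have := sqr_ge0 (u ord0 i - v ord0 i); nra.
have := enorm_ge0 u; have := enorm_ge0 v; nra.
Qed.

End enorm.

Lemma mul_invX_le (R : realFieldType) (A B D : R) (m : nat) :
  0 < A -> 0 < B -> 0 < D -> D <= 2 * (A + B) ->
  (A ^+ m)^-1 * (B ^+ m)^-1 <= 4 ^+ m * (D ^+ m)^-1 * ((A ^+ m)^-1 + (B ^+ m)^-1).
Proof.
wlog BA : A B / B <= A.
  move=> wlogH A0 B0 D0 DAB; have [BA|/ltW AB] := leP B A; first exact: wlogH.
  by rewrite mulrC addrC; apply: wlogH; rewrite // addrC.
move=> A0 B0 D0 DAB.
have invA_le : (A ^+ m)^-1 <= 4 ^+ m * (D ^+ m)^-1.
  have -> : 4 ^+ m * (D ^+ m)^-1 = ((D / 4) ^+ m)^-1.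
    by rewrite exprMn exprVn invfM invrK mulrC.
  rewrite lef_pV2 ?posrE ?exprn_gt0 ?divr_gt0 //.
  by rewrite lerXn2r ?nnegrE; lra.
apply: (@le_trans _ _ ((4 ^+ m * (D ^+ m)^-1) * (B ^+ m)^-1)).
  by rewrite ler_wpM2r // invr_ge0 exprn_ge0 // ltW.
have A0' := ltW A0; have B0' := ltW B0; have D0' := ltW D0.
apply: ler_wpM2l; first by rewrite mulr_ge0 ?invr_ge0 ?exprn_ge0.
by rewrite lerDr invr_ge0 exprn_ge0.
Qed.

Section real_measurable.
Variable R : realType.

Lemma sqrtr_measurable : measurable_fun [set: R] Num.sqrt.
Proof. by apply: nondecreasing_measurable => // a b; apply: ler_wsqrtr. Qed.

Lemma invr_measurable : measurable_fun [set: R] GRing.inv.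
Proof.
rewrite -(setUCl [set 0]); apply/measurable_funU => //; first exact: measurableC.
split; last exact: measurable_fun_set1.
apply: open_continuous_measurable_fun.
  apply: closed_openC; apply: accessible_closed_set1.
  exact/hausdorff_accessible/Rhausdorff.
by move=> x; rewrite inE /= => /eqP x0; apply: inv_continuous.
Qed.

End real_measurable.

Lemma enorm_measurable (R : realType) m d (T : measurableType d) (w : T -> 'rV[R]_m) :
  (forall j, measurable_fun setT (fun q => w q ord0 j)) ->
  measurable_fun setT (fun q => enorm (w q)).
Proof.
move=> mw; apply: measurableT_comp (@sqrtr_measurable R) _.
by apply: measurable_sum => j; apply: measurable_funX.
Qed.

Section rational_balls.
Variables (R : realType) (N : nat).

Definition rat_ball (u : {ffun 'I_N -> rat} * rat * rat) : set ('rV[R]_N * R) :=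
  ball (\row_j (ratr (u.1.1 j) : R), (ratr u.1.2 : R)) (ratr u.2 : R).

Lemma ball_ratr (x r : R) : 0 < r -> exists c : rat, ball x r (ratr c).
Proof.
move=> r0; have [c] : exists c : rat, ratr c \in `]x - r, x + r[.
  by apply: rat_in_itvoo; rewrite ltrBlDr -addrA ltrDl addr_gt0.
by rewrite in_itv /= => cx; exists c; rewrite /ball /= ltr_distlC.
Qed.

Lemma open_bigcup_rat_ball (A : set ('rV[R]_N * R)) : open A ->
  A = \bigcup_(u in [set u | rat_ball u `<=` A]) rat_ball u.
Proof.
move=> oA; apply/seteqP; split => [p Ap|p [u /= uA /uA] //].
have /nbhs_ballP[e /= e0 eA] := oA _ Ap.
have [r /andP[r0 re]] : exists r : rat, (0 < ratr r :> R) && (ratr r < e / 2 :> R).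
  by have [r] := rat_in_itvoo (divr_gt0 e0 (ltr0Sn R 1)); rewrite in_itv /=; exists r.
have [cx cxE] := choice (fun j : 'I_N => ball_ratr (p.1 ord0 j) r0).
have [ct ctE] := ball_ratr p.2 r0.
have pu : ball p (ratr r) (\row_j (ratr ([ffun j => cx j] j) : R), (ratr ct : R)).
  by split => //=; split => // i j; rewrite (ord1 i) !mxE ffunE; apply: cxE.
exists ([ffun j => cx j], ct, r); last exact: ball_sym.
move=> q uq; apply: eA; apply: (@le_ball _ _ _ (ratr r + ratr r)).
  by rewrite -mulr2n -mulr_natr -ler_pdivlMr // ltW.
exact: ball_triangle pu uq.
Qed.

End rational_balls.

Section borel_preimage.
Variables (R : realType) (N : nat) (d : measure_display) (T : measurableType d).
Variables (w : T -> 'rV[R]_N) (s : T -> R).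
Hypothesis mw : forall j, measurable_fun setT (fun q => w q ord0 j).
Hypothesis ms : measurable_fun setT s.
Let ws q : 'rV[R]_N * R := (w q, s q).

Lemma measurable_preimage_ball (p : 'rV[R]_N * R) (r : R) :
  measurable (ws @^-1` ball p r).
Proof.
have [r0|r0] := leP r 0.
  suff -> : ws @^-1` ball p r = set0 by [].
  by apply/seteqP; split => // q /= [[]] /=; rewrite ltNge r0.
have -> : ws @^-1` ball p r =
    \bigcap_(j in [set: 'I_N]) ((fun q => w q ord0 j) @^-1` ball (p.1 ord0 j) r)
    `&` (s @^-1` ball p.2 r).
  apply/seteqP; split => q /=.
    by move=> [[_ wq] sq]; split => //= j _; apply: (wq ord0 j).
  by move=> [wq sq]; split => //=; split => // i j; rewrite (ord1 i); apply: wq.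
have mball (x : R) : measurable (ball x r) by apply: open_measurable; apply: ball_open.
apply: measurableI.
  apply: fin_bigcap_measurable; first exact: finite_finset.
  by move=> j _; rewrite -[X in measurable X]setTI; apply: mw.
by rewrite -[X in measurable X]setTI; apply: ms.
Qed.

Lemma measurable_preimage_open (A : set ('rV[R]_N * R)) : open A ->
  measurable (ws @^-1` A).
Proof.
move=> /open_bigcup_rat_ball ->; rewrite preimage_bigcup bigcup_mkcond.
apply: countable_bigcupT_measurable; first exact: countableP.
by move=> u; case: ifP => _; [apply: measurable_preimage_ball|apply: measurable0].
Qed.

Lemma measurable_preimage_borel (A : set ('rV[R]_N * R)) :
  (<<s @open ('rV[R]_N * R)%type >>) A -> measurable (ws @^-1` A).
Proof.
move: A; apply: (@smallest_sub _ _ _ [set A | measurable (ws @^-1` A)]).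
  split => /=.
  - by rewrite preimage_set0.
  - by move=> A mA; rewrite setTD preimage_setC; apply: measurableC.
  - by move=> F mF; rewrite preimage_bigcup; apply: bigcupT_measurable.
exact: measurable_preimage_open.
Qed.

Lemma measurable_borel_comp (h : 'rV[R]_N -> R -> R) : borel_measurable_RnR h ->
  measurable_fun setT (fun q => h (w q) (s q)).
Proof. by move=> mh _ B mB; rewrite setTI; apply: (measurable_preimage_borel (mh B mB)). Qed.

End borel_preimage.

Section iterated_integral.
Variable R : realType.
Local Open Scope ereal_scope.
Notation LR := (measurableTypeR R).

Lemma iint_ge0 k (f : 'rV[R]_k -> \bar R) : (forall v, 0 <= f v) -> 0 <= iint f.
Proof.
elim: k f => [|k IH] f f0 /=; first exact: f0.
by apply: integral_ge0 => x _; apply: IH.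
Qed.

(* Unlike [ge0_le_integral], no measurability is needed: a nonnegative
   integral is a supremum over the simple functions below the integrand. *)
Lemma ge0_le_integral_nomeas d (T : measurableType d)
    (mu : {measure set T -> \bar R}) (D : set T) (f g : T -> \bar R) :
  (forall x, D x -> 0 <= f x) -> (forall x, D x -> f x <= g x) ->
  \int[mu]_(x in D) f x <= \int[mu]_(x in D) g x.
Proof.
move=> f0 fg; have g0 x : D x -> 0 <= g x by move=> Dx; apply: le_trans (f0 _ Dx) (fg _ Dx).
rewrite (ge0_integralE _ f0) (ge0_integralE _ g0).
apply: ereal_sup_le => _ [h /= hf <-]; exists h => //= x.
by apply: le_trans (hf x) _; rewrite /patch; case: ifP => // /set_mem /fg.
Qed.

Lemma le_iint k (f g : 'rV[R]_k -> \bar R) :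
  (forall v, 0 <= f v) -> (forall v, f v <= g v) -> iint f <= iint g.
Proof.
elim: k f g => [|k IH] f g f0 fg /=; first exact: fg.
by apply: ge0_le_integral_nomeas => x _; [apply: iint_ge0|apply: IH].
Qed.

(* [jointly_measurable f] says that (p, x_1, ..., x_k) |-> f p (x_1, ..., x_k)
   is measurable on the nested product (...((T * R) * R) ...) * R, the shape in
   which Tonelli's theorem is applied at each layer of [iint]. *)
Fixpoint jointly_measurable (k : nat) :
    forall d (T : measurableType d), (T -> 'rV[R]_k -> \bar R) -> Prop :=
  match k with
  | 0 => fun d T f => measurable_fun [set: T] (fun p => f p 0%R)
  | k'.+1 => fun d T f =>
      @jointly_measurable k' _ (T * LR)%type
        (fun q v => f q.1 (row_mx (\row_(j < 1) (q.2 : R)) v))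
  end.

Lemma jointly_measurableD k : forall d (T : measurableType d)
    (f g : T -> 'rV[R]_k -> \bar R),
  jointly_measurable f -> jointly_measurable g ->
  jointly_measurable (fun p v => f p v + g p v).
Proof. by elim: k => [|k IH] d T f g /=; [apply: emeasurable_funD|apply: IH]. Qed.

Definition subst_measurable k d (T : measurableType d) (f : T -> 'rV[R]_k -> R) :=
  forall d' (T' : measurableType d') (g : T' -> T) (w : T' -> 'rV[R]_k),
    measurable_fun setT g -> (forall j, measurable_fun setT (fun q => w q ord0 j)) ->
    measurable_fun setT (fun q => f (g q) (w q)).

Lemma subst_measurable_jointly k : forall d (T : measurableType d)
    (f : T -> 'rV[R]_k -> R),
  subst_measurable f -> jointly_measurable (fun p v => (f p v)%:E).
Proof.
elim: k => [|k IH] d T f mf /=.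
  by apply/measurable_EFinP; apply: (mf _ _ id (fun _ => 0%R)) => // - [].
apply: IH => d' T' g w mg mw.
apply: (mf _ _ (fst \o g) (fun q => row_mx (\row_(j < 1) ((g q).2 : R)) (w q))).
  exact: measurableT_comp.
move=> j; have := @splitK 1 k j.
case: (@fintype.split 1 k j) => [j1|j2] <- /=.
  have -> : (fun q => row_mx (\row_(j < 1) ((g q).2 : R)) (w q) ord0 (lshift k j1))
      = (fun q => (g q).2) by apply/funext => q; rewrite row_mxEl mxE.
  exact: measurableT_comp (@measurable_snd _ _ T LR) mg.
have -> : (fun q => row_mx (\row_(j < 1) ((g q).2 : R)) (w q) ord0 (rshift 1 j2))
    = (fun q => w q ord0 j2) by apply/funext => q; rewrite row_mxEr.
exact: mw.
Qed.

Lemma measurable_iint k : forall d (T : measurableType d) (f : T -> 'rV[R]_k -> \bar R),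
  (forall p v, 0 <= f p v) -> jointly_measurable f ->
  measurable_fun setT (fun p => iint (f p)).
Proof.
elim: k => [|k IH] d T f f0 /= mf; first exact: mf.
have := IH _ _ _ (fun q v => f0 q.1 _) mf.
by move/measurable_fun_fubini_tonelli_F; apply=> q; apply: iint_ge0.
Qed.

Lemma ge0_iintD k : forall d (T : measurableType d) (f g : T -> 'rV[R]_k -> \bar R),
  (forall p v, 0 <= f p v) -> (forall p v, 0 <= g p v) ->
  jointly_measurable f -> jointly_measurable g ->
  forall p, iint (fun v => f p v + g p v) = iint (f p) + iint (g p).
Proof.
elim: k => [|k IH] d T f g f0 g0 mf mg p //=.
have mF := measurable_iint (fun q v => f0 q.1 _) mf.
have mG := measurable_iint (fun q v => g0 q.1 _) mg.
under eq_integral => x _ do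
  rewrite (IH _ _ _ _ (fun q v => f0 q.1 _) (fun q v => g0 q.1 _) mf mg (p, x)).
apply: ge0_integralD => //.
- by move=> x _; apply: iint_ge0.
- exact: measurable_fun_pair2 p mF.
- by move=> x _; apply: iint_ge0.
- exact: measurable_fun_pair2 p mG.
Qed.

Lemma ge0_iintZl k : forall d (T : measurableType d) (f : T -> 'rV[R]_k -> \bar R) (c : R),
  (0 <= c)%R -> (forall p v, 0 <= f p v) -> jointly_measurable f ->
  forall p, iint (fun v => c%:E * f p v) = c%:E * iint (f p).
Proof.
elim: k => [|k IH] d T f c c0 f0 mf p //=.
have mF := measurable_iint (fun q v => f0 q.1 _) mf.
under eq_integral => x _ do rewrite (IH _ _ _ _ c0 (fun q v => f0 q.1 _) mf (p, x)).
apply: ge0_integralZl_EFin => //.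
- by move=> x _; apply: iint_ge0.
- exact: measurable_fun_pair2 p mF.
Qed.

End iterated_integral.

Section kernel.
Variables (R : realType) (n : nat).
Implicit Types x y z u : 'rV[R]_n.

Definition kernel1 u (s : R) : R := ((enorm u + Num.sqrt s) ^+ n.+1)^-1.

Lemma kernel1_ge0 u s : 0 <= kernel1 u s.
Proof. by rewrite invr_ge0 exprn_ge0 // addr_ge0 ?enorm_ge0 ?sqrtr_ge0. Qed.

Lemma K1_kernel1 x t y s : s < t -> K1 x t y s = (kernel1 (x - y) (t - s))%:E.
Proof. by move=> st; rewrite /K1 ltNge (ltW st) /= (gt_eqF st) andbF. Qed.

Lemma kernel1_mul_le x y z (t tau : R) : 0 < tau < t ->
  kernel1 (x - z) (t - tau) * kernel1 (y - z) tau <=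
  4 ^+ n.+1 * kernel1 (x - y) t * (kernel1 (x - z) (t - tau) + kernel1 (y - z) tau).
Proof.
move=> /andP[tau0 taut]; apply: mul_invX_le.
- by rewrite ltr_wpDl ?enorm_ge0 // sqrtr_gt0 subr_gt0.
- by rewrite ltr_wpDl ?enorm_ge0 // sqrtr_gt0.
- by rewrite ltr_wpDl ?enorm_ge0 // sqrtr_gt0 (lt_trans tau0).
have enorm_le : enorm (x - y) <= 2 * (enorm (x - z) + enorm (y - z)).
  by rewrite -(enormN (y - z)) opprB -[x - y](subrKA z) enormD_le2.
have sqrt_le : Num.sqrt t <= Num.sqrt (t - tau) + Num.sqrt tau.
  by rewrite -{1}(subrK tau t); apply: sqrtrD_le; rewrite ?subr_ge0 ltW.
have := sqrtr_ge0 (t - tau); have := sqrtr_ge0 tau; lra.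
Qed.

Variable b : 'rV[R]_n -> R -> 'rV[R]_n.

Definition kernel1_weight u (phi : R -> R) (tau : R) z : \bar R :=
  (kernel1 (u - z) (phi tau) * enorm (b z tau))%:E.

Lemma kernel1_weight_ge0 u phi tau z : (0 <= kernel1_weight u phi tau z)%E.
Proof. by rewrite lee_fin mulr_ge0 ?kernel1_ge0 ?enorm_ge0. Qed.

Lemma integral_iint_kernel1_weight_le_Bfun u (t : R) (phi : R -> R) :
  (forall tau, phi tau = t - tau \/ phi tau = tau) ->
  (\int[@lebesgue_measure R]_(tau in `]0%R, t%R[) iint (kernel1_weight u phi tau)
     <= Bfun b 0 t)%E.
Proof.
move=> phiE; apply: le_trans (ereal_sup_ubound _); last by exists u.
apply: ge0_le_integral_nomeas => [tau _|tau].
  by apply: iint_ge0; apply: kernel1_weight_ge0.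
rewrite /= in_itv /= => /andP[tau0 taut]; apply: le_iint => z.
  exact: kernel1_weight_ge0.
rewrite !K1_kernel1 // subr0 -EFinD -EFinM lee_fin ler_wpM2r ?enorm_ge0 //.
by case: (phiE tau) => ->; rewrite ?lerDl ?lerDr kernel1_ge0.
Qed.

Hypothesis mb : forall i, borel_measurable_RnR (fun z tau => b z tau ord0 i).

Lemma jointly_measurable_kernel1_weight u (phi : R -> R) :
  measurable_fun setT phi -> jointly_measurable (kernel1_weight u phi).
Proof.
move=> mphi; apply: subst_measurable_jointly => d' T' g w mg mw.
apply: measurable_funM; last first.
  by apply: enorm_measurable => j; apply: (measurable_borel_comp mw mg (mb j)).
apply: measurableT_comp (@invr_measurable R) _; apply: measurable_funX.
apply: measurable_funD.
  apply: enorm_measurable => j; rewrite (_ : (fun q => _) = fun q => u ord0 j - w q ord0 j).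
    exact: measurable_funB.
  by apply/funext => q; rewrite !mxE.
exact: measurableT_comp (@sqrtr_measurable R) (measurableT_comp mphi mg).
Qed.

Lemma measurable_iint_kernel1_weight u (phi : R -> R) (D : set R) :
  measurable_fun setT phi -> measurable_fun D (fun tau => iint (kernel1_weight u phi tau)).
Proof.
move=> mphi; apply: (measurable_funS measurableT (@subsetT _ _)).
apply: measurable_iint (@kernel1_weight_ge0 u phi) _.
exact: jointly_measurable_kernel1_weight.
Qed.

Lemma iint_kernel_product_le x y (t tau : R) : 0 < tau < t ->
  (iint (fun z => (kernel1 (x - z) (t - tau))%:E
                  * (enorm (b z tau) / (enorm (z - y) + Num.sqrt tau) ^+ n.+1)%:E) <=
   (4 ^+ n.+1 * kernel1 (x - y) t)%:E *
     (iint (kernel1_weight x (fun s => t - s)%R tau) + iint (kernel1_weight y id tau)))%E.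
Proof.
move=> tau_t.
have mG := jointly_measurable_kernel1_weight x
  (measurable_funB (measurable_cst t) (@measurable_id _ _ setT)).
have mH := jointly_measurable_kernel1_weight y (@measurable_id _ _ setT).
have c0 : 0 <= 4 ^+ n.+1 * kernel1 (x - y) t by rewrite mulr_ge0 ?exprn_ge0 ?kernel1_ge0.
rewrite -(ge0_iintD (@kernel1_weight_ge0 _ _) (@kernel1_weight_ge0 _ _) mG mH).
rewrite -(ge0_iintZl c0 (fun s z => adde_ge0 (kernel1_weight_ge0 _ _ s z)
                                              (kernel1_weight_ge0 _ _ s z))
                        (jointly_measurableD mG mH)).
apply: le_iint => z.
  rewrite -EFinM lee_fin mulr_ge0 ?kernel1_ge0 // divr_ge0 ?enorm_ge0 //.
  by rewrite exprn_ge0 // addr_ge0 ?enorm_ge0 ?sqrtr_ge0.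
rewrite /kernel1_weight -EFinD -!EFinM lee_fin -(enormN (z - y)) opprB.
rewrite [_ / _]mulrC mulrA -mulrDl mulrA.
by apply: ler_wpM2r; [apply: enorm_ge0|apply: kernel1_mul_le].
Qed.

End kernel.

Theorem lemma3p1 (R : realType) (n : nat) :
  exists C : R,
  forall b : 'rV[R]_n -> R -> 'rV[R]_n,
  locally_integrable_vf b ->
  forall (x y : 'rV[R]_n) (t : R), 0 < t ->
  (\int[@lebesgue_measure R]_(tau in `]0%R, t%R[)
     iint (fun z : 'rV[R]_n =>
       ((enorm (x - z) + Num.sqrt (t - tau)) ^+ n.+1)^-1%:E
       * (enorm (b z tau) / (enorm (z - y) + Num.sqrt tau) ^+ n.+1)%:E)
   <= C%:E * Bfun b 0 t * K1 x t y 0)%E.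
Proof.
exists (2 * 4 ^+ n.+1) => b [mb _] x y t t0.
pose IG tau := iint (kernel1_weight b x (fun s => t - s) tau).
pose IH tau := iint (kernel1_weight b y id tau).
pose c := 4 ^+ n.+1 * kernel1 (x - y) t.
have c0 : 0 <= c by rewrite mulr_ge0 ?exprn_ge0 ?kernel1_ge0.
have mIG : measurable_fun `]0%R, t%R[ IG.
  exact: (measurable_iint_kernel1_weight mb x (phi := fun s => t - s))
    (measurable_funB (measurable_cst t) (@measurable_id _ _ setT)).
have mIH : measurable_fun `]0%R, t%R[ IH.
  by apply: (measurable_iint_kernel1_weight mb y (phi := id)); apply: measurable_id.
have IG0 tau : (0 <= IG tau)%E by apply: iint_ge0; apply: kernel1_weight_ge0.
have IH0 tau : (0 <= IH tau)%E by apply: iint_ge0; apply: kernel1_weight_ge0.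
have IGB := integral_iint_kernel1_weight_le_Bfun b x (t := t) (fun tau => or_introl erefl).
have IHB := integral_iint_kernel1_weight_le_Bfun b y (t := t) (phi := id)
  (fun tau => or_intror erefl).
have mD : measurable (`]0, t[ : set R) by apply: measurable_itv.
rewrite K1_kernel1 // subr0.
apply: (@le_trans _ _
  (\int[lebesgue_measure]_(tau in `]0%R, t%R[) (c%:E * (IG tau + IH tau)))%E).
  apply: ge0_le_integral_nomeas => [tau _|tau]; last first.
    by rewrite /= in_itv /=; apply: iint_kernel_product_le.
  apply: iint_ge0 => z; rewrite -EFinM lee_fin mulr_ge0 ?kernel1_ge0 //.
  by rewrite divr_ge0 ?enorm_ge0 ?exprn_ge0 ?addr_ge0 ?enorm_ge0 ?sqrtr_ge0.
rewrite ge0_integralZl_EFin //; last 2 first.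
- by move=> tau _; rewrite adde_ge0.
- exact: emeasurable_funD.
rewrite ge0_integralD //.
apply: le_trans (lee_wpmul2l _ (leeD IGB IHB)) _; first by rewrite lee_fin.
by rewrite -mule2n -mule_natr muleCA muleAC [leRHS]muleC -!EFinM /c mulrC mulrA.
Qed.
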